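(* Let $A$ be a finite-dimensional evolution algebra. Then $A$ is semisimple if and only if $A$ has a unit.
   Context: An evolution algebra is an algebra $A$ over $\mathbb{K}\in\{\mathbb{R},\mathbb{C}\}$ with a basis $\{e_i\}$ (natural basis) with $e_ie_j=0$ for $i\neq j$. An ideal $M$ is modular if some $u\in A$ satisfies $a-au\in M$ for all $a\in A$; $\mathrm{Rad}(A)$ is the intersection of all maximal modular ideals (equal to $A$ if there are none); $A$ is semisimple if $\mathrm{Rad}(A)=\{0\}$. *)

From HB Require Import structures.
From mathcomp Require Import all_boot all_order all_algebra.
Set Implicit Arguments. Unset Strict Implicit. Unset Printing Implicit Defensive.
Import GRing.Theory.
Local Open Scope ring_scope.

(* A finite-dimensional evolution algebra over K with natural basis
   e_0, ..., e_(n-1) is (up to isomorphism) K^n = 'rV[K]_n with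
   e_i e_j = 0 for i <> j and e_i e_i = sum_k C i k e_k, where
   C : 'M[K]_n is the matrix of structure constants.  Bilinear
   extension gives (x y)_k = sum_i x_i y_i C_(i,k). *)
Definition evo_mul (K : fieldType) (n : nat) (C : 'M[K]_n)
  (x y : 'rV[K]_n) : 'rV[K]_n :=
  \row_(k < n) \sum_(i < n) x 0 i * y 0 i * C i k.

(* Subspaces of A are represented as row spaces of square matrices. *)
Definition evo_ideal (K : fieldType) (n : nat) (C : 'M[K]_n) (M : 'M[K]_n) : Prop :=
  forall x y : 'rV[K]_n, (x <= M)%MS ->
    (evo_mul C x y <= M)%MS /\ (evo_mul C y x <= M)%MS.

Definition evo_modular (K : fieldType) (n : nat) (C : 'M[K]_n) (M : 'M[K]_n) : Prop :=
  exists u : 'rV[K]_n, forall a : 'rV[K]_n, (a - evo_mul C a u <= M)%MS.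

(* Maximal modular ideal: a proper modular ideal which is maximal among
   proper ideals (equivalently among proper modular ideals, since any
   ideal containing a modular ideal is modular). *)
Definition evo_max_modular (K : fieldType) (n : nat) (C : 'M[K]_n) (M : 'M[K]_n) : Prop :=
  [/\ evo_ideal C M, evo_modular C M, ~~ row_full M &
      forall N : 'M[K]_n, evo_ideal C N -> (M <= N)%MS ->
        (N == M)%MS \/ row_full N].

(* x lies in Rad(A), the intersection of all maximal modular ideals
   (this is all of A when there are none). *)
Definition evo_in_rad (K : fieldType) (n : nat) (C : 'M[K]_n) (x : 'rV[K]_n) : Prop :=
  forall M : 'M[K]_n, evo_max_modular C M -> (x <= M)%MS.

Definition evo_semisimple (K : fieldType) (n : nat) (C : 'M[K]_n) : Prop :=
  forall x : 'rV[K]_n, evo_in_rad C x -> x = 0.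

Definition evo_has_unit (K : fieldType) (n : nat) (C : 'M[K]_n) : Prop :=
  exists u : 'rV[K]_n, forall a : 'rV[K]_n,
    evo_mul C a u = a /\ evo_mul C u a = a.

From HB Require Import structures.
From mathcomp Require Import all_boot all_order all_algebra.
Set Implicit Arguments. Unset Strict Implicit. Unset Printing Implicit Defensive.
Import GRing.Theory.
Local Open Scope ring_scope.

(* Both conditions say that every structure column is pure: e_i^2 has no
   e_j-component for i <> j, and e_j^2 is a nonzero multiple of e_j.  A unit
   forces this at once.  Conversely, if column j is pure, the coordinate
   hyperplane x_j = 0 is a maximal modular ideal; and if column j is not pure,
   every maximal modular ideal M contains e_j, since otherwise M + K e_j is an
   ideal, hence all of A, which forces M to be that coordinate hyperplane, and
   the hyperplane is a modular ideal only for a pure column.  So Rad(A) = 0 iff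
   all columns are pure. *)

Section EvolutionAlgebra.
Variables (K : fieldType) (n : nat) (C : 'M[K]_n).
Local Notation mul := (evo_mul C).
Local Notation e j := (delta_mx (0 : 'I_1) j : 'rV[K]_n).

Lemma evo_mulC x y : mul x y = mul y x.
Proof. by apply/rowP=> k; rewrite !mxE; apply: eq_bigr=> i _; rewrite (mulrC (x 0 i)). Qed.

Lemma evo_mulDl x y z : mul (x + y) z = mul x z + mul y z.
Proof.
by apply/rowP=> k; rewrite !mxE -big_split; apply: eq_bigr=> i _; rewrite !mxE !mulrDl.
Qed.

Lemma evo_mulZl a x z : mul (a *: x) z = a *: mul x z.
Proof. by apply/rowP=> k; rewrite !mxE mulr_sumr; apply: eq_bigr=> i _; rewrite !mxE !mulrA. Qed.

Lemma evo_mul_deltal j y : mul (e j) y = y 0 j *: row j C.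
Proof.
apply/rowP=> k; rewrite !mxE (bigD1 j) //= big1 => [|i ij].
  by rewrite mxE !eqxx /= mul1r addr0.
by rewrite mxE (negbTE ij) /= !mul0r.
Qed.

Lemma delta_coord i j : (e i) 0 j = (i == j)%:R.
Proof. by rewrite mxE eqxx /= eq_sym. Qed.

Lemma delta_neq0 j : e j != 0.
Proof. by apply/eqP=> /rowP/(_ j); rewrite !mxE !eqxx => /eqP; rewrite oner_eq0. Qed.

Lemma evo_idealP M :
  (forall x y, (x <= M)%MS -> (mul x y <= M)%MS) -> evo_ideal C M.
Proof. by move=> idM x y xM; rewrite [mul y x]evo_mulC; split; apply: idM. Qed.

Lemma submxB m1 m2 (A B : 'M[K]_(m1, n)) (M : 'M[K]_(m2, n)) :
  (A <= M)%MS -> (B <= M)%MS -> (A - B <= M)%MS.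
Proof. by move=> AM BM; rewrite addmx_sub ?eqmx_opp. Qed.

Lemma sub_delta_coord m (M : 'M[K]_(m, n)) j (x : 'rV[K]_n) :
  (forall i, i != j -> (e i <= M)%MS) -> x 0 j = 0 -> (x <= M)%MS.
Proof.
move=> eM xj; rewrite (row_sum_delta x); apply: summx_sub=> i _.
have [->|ij] := eqVneq i j; first by rewrite xj scale0r sub0mx.
exact/scalemx_sub/eM.
Qed.

Lemma delta_sub_coord m (M : 'M[K]_(m, n)) j (x : 'rV[K]_n) :
  (forall i, i != j -> (e i <= M)%MS) -> (x <= M)%MS -> x 0 j != 0 -> (e j <= M)%MS.
Proof.
move=> eM xM xj; rewrite -(eqmx_scale _ xj).
have -> : x 0 j *: e j = x - (x - x 0 j *: e j) by rewrite opprB addrC subrK.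
by apply: submxB => //; apply: sub_delta_coord eM _; rewrite !mxE !eqxx mulr1 subrr.
Qed.

Lemma delta_sub_full m (M : 'M[K]_(m, n)) :
  (forall i, (e i <= M)%MS) -> row_full M.
Proof. by move=> eM; rewrite -sub1mx; apply/row_subP=> i; rewrite row1. Qed.

Definition pure_col j := (C j j != 0) && [forall i, (i != j) ==> (C i j == 0)].

Lemma pure_colP j :
  reflect (C j j != 0 /\ forall i, i != j -> C i j = 0) (pure_col j).
Proof.
apply: (iffP andP) => -[Cjj Cj]; split => //.
- by move=> i ij; apply/eqP; exact: implyP (forallP Cj i) ij.
- by apply/forallP=> i; apply/implyP=> ij; rewrite Cj.
Qed.

Lemma evo_unit_pure_col : evo_has_unit C -> forall j, pure_col j.
Proof.
case=> u unit_u.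
have ue i : u 0 i *: row i C = e i.
  by rewrite -evo_mul_deltal evo_mulC; case: (unit_u (e i)).
have uCii i : u 0 i * C i i = 1.
  by have := congr1 (fun v : 'rV[K]_n => v 0 i) (ue i); rewrite !mxE !eqxx.
move=> j; apply/pure_colP; split.
  by apply/eqP=> Cjj0; have /eqP := uCii j; rewrite Cjj0 mulr0 eq_sym oner_eq0.
move=> i ij; have := congr1 (fun v : 'rV[K]_n => v 0 j) (ue i).
rewrite !mxE eqxx /= eq_sym (negbTE ij) => /eqP; rewrite mulf_eq0 => /orP[/eqP ui0|/eqP //].
by have /eqP := uCii i; rewrite ui0 mul0r eq_sym oner_eq0.
Qed.

Lemma pure_col_evo_unit : (forall j, pure_col j) -> evo_has_unit C.
Proof.
move=> pure; exists (\row_i (C i i)^-1) => a.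
suff ua : mul a (\row_i (C i i)^-1) = a by split; rewrite // evo_mulC.
apply/rowP=> k; have /pure_colP[Ckk Ck] := pure k.
rewrite !mxE (bigD1 k) //= big1 => [|i ik]; last by rewrite Ck // mulr0.
by rewrite mxE addr0 -mulrA mulVf ?mulr1.
Qed.

Definition hyperplane j : 'M[K]_n := diag_mx (\row_k (k != j)%:R).

Lemma sub_hyperplane j (x : 'rV[K]_n) : (x <= hyperplane j)%MS = (x 0 j == 0).
Proof.
apply/idP/eqP => [/submxP[w ->]|xj]; first by rewrite mul_mx_diag !mxE eqxx mulr0.
apply/submxP; exists x; apply/rowP=> k; rewrite mul_mx_diag !mxE.
by have [->|] := eqVneq k j; rewrite ?xj ?mul0r ?mulr1.
Qed.

Lemma delta_sub_hyperplane i j : (e i <= hyperplane j)%MS = (i != j).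
Proof. by rewrite sub_hyperplane delta_coord; case: (i == j); rewrite ?oner_eq0 ?eqxx. Qed.

Lemma hyperplane_maximal j m (N : 'M[K]_(m, n)) :
  (hyperplane j <= N)%MS -> (N <= hyperplane j)%MS \/ row_full N.
Proof.
move=> HN; have [NH|NnH] := boolP (N <= hyperplane j)%MS; [by left | right].
have eN : forall i, i != j -> (e i <= N)%MS.
  by move=> i ij; rewrite (submx_trans _ HN) // delta_sub_hyperplane.
case/row_subPn: NnH => k; rewrite sub_hyperplane => Nkj.
apply: delta_sub_full => i; have [->|] := eqVneq i j; last exact: eN.
exact: delta_sub_coord eN (row_sub k N) Nkj.
Qed.

Lemma hyperplane_max_modular j : pure_col j -> evo_max_modular C (hyperplane j).
Proof.
case/pure_colP => Cjj Cj; split.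
- apply: evo_idealP => x y; rewrite !sub_hyperplane => /eqP xj.
  rewrite mxE (bigD1 j) //= xj !mul0r add0r big1 // => i ij.
  by rewrite Cj // mulr0.
- exists ((C j j)^-1 *: e j) => a; rewrite sub_hyperplane !mxE (bigD1 j) //=.
  rewrite big1 => [|i ij]; last by rewrite !mxE (negbTE ij) /= !mulr0 mul0r.
  by rewrite !mxE !eqxx /= mulr1 addr0 -mulrA mulVf ?mulr1 ?subrr.
- by apply/negP => /(submx_full (e j)); rewrite delta_sub_hyperplane eqxx.
- move=> N _ HN; have [NH|] := hyperplane_maximal HN; [by left; apply/andP | by right].
Qed.

Lemma hyperplane_pure_col (M : 'M[K]_n) j :
  (forall x : 'rV[K]_n, (x <= M)%MS = (x 0 j == 0)) ->
  evo_ideal C M -> evo_modular C M -> pure_col j.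
Proof.
move=> subM idM [u modu]; apply/pure_colP; split.
  apply/eqP => Cjj0; have := modu (e j).
  by rewrite subM evo_mul_deltal !mxE !eqxx /= Cjj0 mulr0 subr0 oner_eq0.
move=> i ij; have eiM : (e i <= M)%MS by rewrite subM delta_coord (negbTE ij).
have := (idM _ (e i) eiM).1.
by rewrite subM evo_mul_deltal delta_coord eqxx scale1r mxE => /eqP.
Qed.

Lemma evo_ideal_adds_delta (M : 'M[K]_n) j :
  evo_ideal C M -> (row j C <= M + e j)%MS -> evo_ideal C (M + e j)%MS.
Proof.
move=> idM rowN; apply: evo_idealP => x y /sub_addsmxP[[v w] ->] /=.
rewrite evo_mulDl (mx11_scalar w) mul_scalar_mx evo_mulZl evo_mul_deltal.
rewrite addmx_sub ?scalemx_sub // (submx_trans _ (addsmxSl M (e j))) //.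
exact: (idM _ y (submxMl _ _)).1.
Qed.

Lemma max_modular_delta_sub (M : 'M[K]_n) j :
  evo_max_modular C M -> ~~ (e j <= M)%MS -> forall i, i != j -> (e i <= M)%MS.
Proof.
case=> idM [u modu] _ maxM ejM i ij.
have modue k : (e k - u 0 k *: row k C <= M)%MS by rewrite -evo_mul_deltal.
have rowN : (row j C <= M + e j)%MS.
  have uj : u 0 j != 0.
    by apply: contra ejM => /eqP uj0; have := modue j; rewrite uj0 scale0r subr0.
  rewrite -(eqmx_scale _ uj).
  have -> : u 0 j *: row j C = e j - (e j - u 0 j *: row j C) by rewrite opprB addrC subrK.
  by rewrite submxB ?addsmxSr // (submx_trans (modue j)) ?addsmxSl.
have fullN : row_full (M + e j)%MS.
  case: (maxM _ (evo_ideal_adds_delta idM rowN) (addsmxSl _ _)) => // /andP[NM _].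
  by case/negP: ejM; rewrite (submx_trans (addsmxSr M (e j)) NM).
(* e_i = m + c e_j with m in M, and e_i e_j = 0, so e_i^2 = e_i m lies in M. *)
have /sub_addsmxP[[v w] /= ei] := submx_full (e i) fullN.
have rowiM : (row i C <= M)%MS.
  have -> : row i C = mul (e i) (e i) by rewrite evo_mul_deltal delta_coord eqxx scale1r.
  rewrite {1}ei evo_mulDl (mx11_scalar w) mul_scalar_mx evo_mulZl evo_mul_deltal.
  rewrite delta_coord (negbTE ij) scale0r scaler0 addr0.
  exact: (idM _ _ (submxMl v M)).1.
have -> : e i = (e i - u 0 i *: row i C) + u 0 i *: row i C by rewrite subrK.
by rewrite addmx_sub ?scalemx_sub.
Qed.

Lemma max_modular_sub_coord (M : 'M[K]_n) j :
  evo_max_modular C M -> ~~ (e j <= M)%MS ->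
  forall x : 'rV[K]_n, (x <= M)%MS = (x 0 j == 0).
Proof.
move=> maxM ejM x; have eM := max_modular_delta_sub maxM ejM.
apply/idP/eqP => [xM|]; last exact: sub_delta_coord eM.
exact: contraNeq (delta_sub_coord eM xM) ejM.
Qed.

Lemma delta_in_rad j : ~~ pure_col j -> evo_in_rad C (e j).
Proof.
move=> npure M maxM; apply: contraNT npure => ejM.
have [idM modM _ _] := maxM.
exact: hyperplane_pure_col (max_modular_sub_coord maxM ejM) idM modM.
Qed.

End EvolutionAlgebra.

Theorem corollary3p15 (K : fieldType) (n : nat) (C : 'M[K]_n) :
  evo_semisimple C <-> evo_has_unit C.
Proof.
split => [ss | /evo_unit_pure_col pure].
  apply: pure_col_evo_unit => j; apply: contraT => npure.
  by have := delta_neq0 K j; rewrite (ss _ (delta_in_rad npure)) eqxx.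
move=> x radx; apply/rowP => j; rewrite mxE; apply/eqP.
by rewrite -sub_hyperplane; exact: radx _ (hyperplane_max_modular (pure j)).
Qed.
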